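(* Let $n\ge 1$ be an integer. Knowlton-Graham partitions of $\{1,\ldots,n\}$ exist if and only if there exist a positive integer $m$ and an $m\times m$ matrix with entries in $\{0,1\}$ whose row sums $(r_1,\ldots,r_m)$ and column sums $(c_1,\ldots,c_m)$ satisfy: $j$ divides $r_j$ and $j$ divides $c_j$ for every $1\le j\le m$, and $r_1+\cdots+r_m=c_1+\cdots+c_m=n$.
   Context: A pair of Knowlton-Graham partitions of $\{1,\ldots,n\}$ consists of two partitions $A_1,\ldots,A_p$ and $B_1,\ldots,B_q$ of $\{1,\ldots,n\}$ into nonempty pairwise disjoint sets such that, for every pair of positive integers $(j,k)$, at most one element of $\{1,\ldots,n\}$ lies both in some $A_i$ with $|A_i|=j$ and in some $B_l$ with $|B_l|=k$. *)

From mathcomp Require Import all_boot all_algebra.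
Set Implicit Arguments. Unset Strict Implicit. Unset Printing Implicit Defensive.

(* The ground set {1,...,n} is modelled by 'I_n (element i stands for i+1). *)

Definition in_block_of_size (n : nat) (P : {set {set 'I_n}}) (j : nat) (x : 'I_n) : bool :=
  [exists A in P, (x \in A) && (#|A| == j)].

Definition KG_pair (n : nat) (P Q : {set {set 'I_n}}) : Prop :=
  partition P [set: 'I_n] /\ partition Q [set: 'I_n] /\
  forall j k : nat,
    #|[set x : 'I_n | in_block_of_size P j x && in_block_of_size Q k x]| <= 1.

Definition KG_exists (n : nat) : Prop := exists P Q : {set {set 'I_n}}, KG_pair P Q.

Definition row_sum (m : nat) (M : 'M[nat]_m) (i : 'I_m) : nat := \sum_(k < m) M i k.
Definition col_sum (m : nat) (M : 'M[nat]_m) (i : 'I_m) : nat := \sum_(k < m) M k i.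

From mathcomp Require Import all_boot all_algebra.
From mathcomp Require Import zify.
Set Implicit Arguments. Unset Strict Implicit. Unset Printing Implicit Defensive.

(* Write sP x and sQ x for the sizes of the blocks containing x.  The
   Knowlton-Graham condition says exactly that x |-> (sP x, sQ x) is injective,
   so counting the points of each size pair gives a 0/1 matrix; its j-th row
   sum is #{x | sP x = j}, a union of j-element blocks, hence divisible by j.
   Conversely, label the points by the n cells of the support of such a matrix.
   A size function is realized by a partition as soon as each size class has
   cardinality divisible by the size (cut the class into consecutive chunks),
   so row and column indices give partitions P, Q, and distinct points, lying
   in distinct cells, have distinct size pairs. *)

Lemma sum_ord_eqS m v : 0 < v <= m -> \sum_(k < m) (v == k.+1 : nat) = 1.
Proof.
case/andP=> v_gt0 le_vm; have lt_vm : v.-1 < m by rewrite prednK.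
rewrite (bigD1 (Ordinal lt_vm)) //= prednK // eqxx big1 // => k neq_k.
case: eqP => // v_eq; case/eqP: neq_k.
by apply: val_inj; rewrite /= v_eq.
Qed.

Lemma sum_card_fiber (T : finType) m (p : pred T) (g : T -> nat) :
    (forall x, 0 < g x <= m) ->
  \sum_(k < m) #|[set x | p x && (g x == k.+1)]| = #|[set x | p x]|.
Proof.
move=> g_range.
transitivity (\sum_(k < m) \sum_x (p x && (g x == k.+1) : nat)).
  by apply: eq_bigr => k _; rewrite -sum1dep_card big_mkcond.
rewrite exchange_big -sum1dep_card [RHS]big_mkcond; apply: eq_bigr => x _ /=.
by case: (p x); [exact: sum_ord_eqS | rewrite big1].
Qed.

Lemma sum_card_size_class (T : finType) m (g : T -> nat) :
  (forall x, 0 < g x <= m) -> \sum_(i < m) #|[set x | g x == i.+1]| = #|T|.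
Proof. by move/(sum_card_fiber predT); rewrite cardsT. Qed.

Lemma card_neq0_sum01 (I : finType) (F : I -> nat) :
  (forall i, F i <= 1) -> #|[set i | F i != 0]| = \sum_i F i.
Proof.
move=> F01; rewrite -sum1dep_card big_mkcond; apply: eq_bigr => i _.
by have := F01 i; case: (F i) => [|[]].
Qed.

Lemma count_divn_iota d k q : 0 < d -> q < k ->
  count (fun t => t %/ d == q) (iota 0 (k * d)) = d.
Proof.
move=> d_gt0 lt_qk.
have -> : k * d = q * d + (d + (k - q.+1) * d) by nia.
rewrite !iotaD !count_cat add0n.
rewrite (@eq_in_count _ _ pred0 (iota 0 (q * d))); last first.
  by move=> t; rewrite mem_iota => /andP[_ ht] /=; apply/eqP; nia.
rewrite (@eq_in_count _ _ predT (iota (q * d) d)); last first.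
  by move=> t; rewrite mem_iota => /andP[h1 h2] /=; apply/eqP; nia.
rewrite (@eq_in_count _ _ pred0 (iota (q * d + d) _)); last first.
  by move=> t; rewrite mem_iota => /andP[ht _] /=; apply/eqP; nia.
by rewrite !count_pred0 count_predT size_iota addn0.
Qed.

Lemma card_count_uniq (T : finType) (s : seq T) (p : pred T) : uniq s ->
  #|[set y | (y \in s) && p y]| = count p s.
Proof.
move=> s_uniq; rewrite -size_filter -(card_uniqP (filter_uniq p s_uniq)).
by apply: eq_card => y; rewrite inE mem_filter andbC.
Qed.

Lemma count_index_iota (T : eqType) (s : seq T) (p : pred nat) : uniq s ->
  count (fun y => p (index y s)) s = count p (iota 0 (size s)).
Proof.
case: s => [|x0 s'] // s_uniq; set s := x0 :: s'.
rewrite -[X in count _ X](mkseq_nth x0 s) /mkseq count_map.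
apply: eq_in_count => i; rewrite mem_iota add0n => /andP[_ lt_is].
exact: (congr1 p (index_uniq x0 lt_is s_uniq)).
Qed.

Lemma card_index_chunk (T : finType) (s : seq T) d x :
    uniq s -> d %| size s -> x \in s ->
  #|[set y | (y \in s) && (index y s %/ d == index x s %/ d)]| = d.
Proof.
move=> s_uniq dvd_ds sx.
have d_gt0 : 0 < d.
  by case: d dvd_ds => //; rewrite dvd0n size_eq0 => /eqP s0; rewrite s0 in sx.
rewrite card_count_uniq // (count_index_iota (fun t => t %/ d == _)) //.
rewrite -(divnK dvd_ds) count_divn_iota //.
by rewrite ltn_divRL // (leq_ltn_trans (leq_divM _ _)) ?divnK ?index_mem.
Qed.

Lemma pblock_preim_partition (T : finType) (rT : eqType) (f : T -> rT)
    (D : {set T}) x :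
  x \in D -> pblock (preim_partition f D) x = [set y in D | f y == f x].
Proof.
move=> Dx; have /and3P[/eqP covP triv _] := preim_partitionP f D.
apply/setP=> y; rewrite inE; case Dy: (y \in D); last first.
  apply/negbTE; apply: contraFN Dy => yPx.
  by rewrite -covP -mem_pblock (same_pblock triv yPx).
rewrite pblock_equivalence_partition //.
by move=> a b c _ _ _; split=> // /eqP->.
Qed.

Lemma partition_of_sizes (T : finType) (sz : T -> nat) :
    (forall x, sz x %| #|[set y | sz y == sz x]|) ->
  exists P : {set {set T}}, partition P [set: T] /\ forall x, #|pblock P x| = sz x.
Proof.
move=> dvd_sz; pose cls j := enum [set y | sz y == j].
(* The block of x: the chunk of length sz x of the class of x containing x. *)
pose key x := (sz x, index x (cls (sz x)) %/ sz x).
exists (preim_partition key [set: T]); split=> [|x]; first exact: preim_partitionP.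
rewrite pblock_preim_partition ?inE //.
have -> : [set y in [set: T] | key y == key x] = [set y | (y \in cls (sz x)) &&
    (index y (cls (sz x)) %/ sz x == index x (cls (sz x)) %/ sz x)].
  apply/setP=> y; rewrite !inE /key xpair_eqE mem_enum inE.
  by case: eqVneq => [->|].
by rewrite card_index_chunk ?enum_uniq ?mem_enum ?inE // -cardE.
Qed.

Lemma dvdn_card_pblock_class (T : finType) (P : {set {set T}}) (D : {set T}) j :
  partition P D -> j %| #|[set x in D | #|pblock P x| == j]|.
Proof.
case/and3P=> /eqP covP triv _.
pose Pj := [set A in P | #|A| == j].
have trivj : trivIset Pj by apply: trivIsetS triv; apply/subsetP=> A /setIdP[].
have -> : [set x in D | #|pblock P x| == j] = cover Pj.
  apply/setP=> x; rewrite inE -covP; apply/andP/bigcupP.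
    by case=> Px szx; exists (pblock P x); rewrite ?inE ?pblock_mem ?mem_pblock.
  case=> A /setIdP[PA /eqP <-] Ax.
  by rewrite (def_pblock triv PA Ax) eqxx; split=> //; apply/bigcupP; exists A.
rewrite -sum1_card (big_trivIset _ trivj) /=.
by apply: dvdn_sum => A /setIdP[_ /eqP szA]; rewrite sum1_card szA.
Qed.

Lemma exists_enum_of_card (T : finType) (A : {set T}) n : #|A| = n ->
  exists f : 'I_n -> T, injective f /\
    forall p : pred T, #|[set x | p (f x)]| = #|[set c in A | p c]|.
Proof.
move=> cardA; pose f x := enum_val (cast_ord (esym cardA) x).
have f_inj : injective f by move=> x y /enum_val_inj /cast_ord_inj.
exists f; split=> // p; rewrite -(card_imset _ f_inj); apply: eq_card => c.
apply/imsetP/idP => [[x] | /setIdP[Ac pc]].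
  by rewrite !inE => px ->; rewrite px andbT enum_valP.
by exists (cast_ord cardA (enum_rank_in Ac c)); rewrite ?inE /f cast_ordK enum_rankK_in.
Qed.

Section JointCount.

Variables (T : finType) (m : nat) (a b : T -> nat).
Hypotheses (a_range : forall x, 0 < a x <= m) (b_range : forall x, 0 < b x <= m).

Definition joint_count_mx : 'M[nat]_m :=
  \matrix_(i, k) #|[set x | (a x == i.+1) && (b x == k.+1)]|.

Lemma row_sum_joint_count i : row_sum joint_count_mx i = #|[set x | a x == i.+1]|.
Proof. by rewrite /row_sum; under eq_bigr do rewrite mxE; apply: sum_card_fiber. Qed.

Lemma col_sum_joint_count k : col_sum joint_count_mx k = #|[set x | b x == k.+1]|.
Proof.
rewrite /col_sum -(sum_card_fiber (fun x => b x == k.+1) a_range).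
by apply: eq_bigr => i _; rewrite mxE; apply: eq_card => x; rewrite !inE andbC.
Qed.

Lemma joint_count_mx_le1 :
  injective (fun x => (a x, b x)) -> forall i k, joint_count_mx i k <= 1.
Proof.
move=> ab_inj i k; rewrite mxE; apply/card_le1_eqP => x y.
rewrite !inE => /andP[/eqP ax /eqP bx] /andP[/eqP ay /eqP b_y].
by apply: ab_inj; rewrite /= ax bx ay b_y.
Qed.

End JointCount.

Section Support.

Variables (m : nat) (M : 'M[nat]_m).
Hypothesis M01 : forall i k, M i k <= 1.

Definition mxsupp : {set 'I_m * 'I_m} := [set c | M c.1 c.2 != 0].

Lemma card_mxsupp : #|mxsupp| = \sum_i row_sum M i.
Proof.
rewrite /mxsupp (@card_neq0_sum01 _ (fun c => M c.1 c.2)) => [|c]; last exact: M01.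
by rewrite -(pair_big predT predT (fun i k => M i k)).
Qed.

Lemma card_mxsupp_row i : #|[set c in mxsupp | c.1 == i]| = row_sum M i.
Proof.
have -> : [set c in mxsupp | c.1 == i] = setX [set i] [set k | M i k != 0].
  apply/setP=> -[i' k]; rewrite !inE.
  by case: (eqVneq i' i) => [->|_] /=; rewrite ?andbT ?andbF.
by rewrite cardsX cards1 mul1n card_neq0_sum01.
Qed.

Lemma card_mxsupp_col k : #|[set c in mxsupp | c.2 == k]| = col_sum M k.
Proof.
have -> : [set c in mxsupp | c.2 == k] = setX [set i | M i k != 0] [set k].
  apply/setP=> -[i k']; rewrite !inE.
  by case: (eqVneq k' k) => [->|_] /=; rewrite ?andbT ?andbF.
by rewrite cardsX cards1 muln1 card_neq0_sum01.
Qed.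

End Support.

Section PartitionOfOrdinal.

Variables (n : nat) (P : {set {set 'I_n}}).
Hypothesis partP : partition P [set: 'I_n].

Lemma in_block_of_sizeE j x : in_block_of_size P j x = (#|pblock P x| == j).
Proof.
have /and3P[/eqP covP triv _] := partP.
apply/existsP/eqP => [[A /and3P[PA Ax /eqP <-]] | szx].
  by rewrite (def_pblock triv PA Ax).
exists (pblock P x); rewrite szx eqxx mem_pblock covP inE andbT.
by rewrite pblock_mem // covP inE.
Qed.

Lemma card_pblock_range x : 0 < #|pblock P x| <= n.
Proof.
have /and3P[/eqP covP _ _] := partP.
rewrite (leq_trans (max_card _)) ?card_ord ?andbT //.
by apply/card_gt0P; exists x; rewrite mem_pblock covP inE.
Qed.

End PartitionOfOrdinal.

Lemma KG_pairE n (P Q : {set {set 'I_n}}) :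
    partition P [set: 'I_n] -> partition Q [set: 'I_n] ->
  KG_pair P Q <-> injective (fun x => (#|pblock P x|, #|pblock Q x|)).
Proof.
move=> partP partQ.
have sizeE x j k : in_block_of_size P j x && in_block_of_size Q k x =
    (#|pblock P x| == j) && (#|pblock Q x| == k).
  by rewrite (in_block_of_sizeE partP) (in_block_of_sizeE partQ).
split=> [[_ [_ KG]] x y [eqPxy eqQxy] | sz_inj].
  have /card_le1_eqP := KG #|pblock P x| #|pblock Q x|.
  by apply; rewrite inE sizeE ?eqPxy ?eqQxy !eqxx.
do 2!split=> //; move=> j k; apply/card_le1_eqP => x y.
rewrite !inE !sizeE => /andP[/eqP Px /eqP Qx] /andP[/eqP Py /eqP Qy].
by apply: sz_inj; rewrite /= Px Qx Py Qy.
Qed.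

Lemma KG_exists_matrix n : 0 < n -> KG_exists n ->
  exists (m : nat) (M : 'M[nat]_m),
    0 < m /\
    (forall i k : 'I_m, M i k <= 1) /\
    (forall i : 'I_m, i.+1 %| row_sum M i) /\
    (forall i : 'I_m, i.+1 %| col_sum M i) /\
    \sum_(i < m) row_sum M i = n /\
    \sum_(i < m) col_sum M i = n.
Proof.
move=> n_gt0 [P [Q KG]]; have [partP [partQ _]] := KG.
have rangeP := card_pblock_range partP; have rangeQ := card_pblock_range partQ.
have dvd_class R j : partition R [set: 'I_n] -> j %| #|[set x | #|pblock R x| == j]|.
  move=> partR; rewrite (_ : [set x | _] = [set x in [set: 'I_n] | #|pblock R x| == j]).
    exact: dvdn_card_pblock_class.
  by apply/setP=> x; rewrite !inE.
exists n, (joint_count_mx n (fun x => #|pblock P x|) (fun x => #|pblock Q x|)).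
do ![split].
- exact: n_gt0.
- exact/joint_count_mx_le1/(KG_pairE partP partQ).
- by move=> i; rewrite row_sum_joint_count // dvd_class.
- by move=> i; rewrite col_sum_joint_count // dvd_class.
- under eq_bigr do rewrite row_sum_joint_count //.
  by rewrite sum_card_size_class // card_ord.
- under eq_bigr do rewrite col_sum_joint_count //.
  by rewrite sum_card_size_class // card_ord.
Qed.

Lemma matrix_KG_exists n m (M : 'M[nat]_m) :
    (forall i k : 'I_m, M i k <= 1) ->
    (forall i : 'I_m, i.+1 %| row_sum M i) ->
    (forall i : 'I_m, i.+1 %| col_sum M i) ->
    \sum_(i < m) row_sum M i = n ->
  KG_exists n.
Proof.
move=> M01 dvd_row dvd_col sum_row.
have [f [f_inj card_f]] := exists_enum_of_card (etrans (card_mxsupp M01) sum_row).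
have dvdP x : (f x).1.+1 %| #|[set y | (f y).1.+1 == (f x).1.+1]|.
  by rewrite (card_f (fun c => c.1 == (f x).1)) card_mxsupp_row.
have dvdQ x : (f x).2.+1 %| #|[set y | (f y).2.+1 == (f x).2.+1]|.
  by rewrite (card_f (fun c => c.2 == (f x).2)) card_mxsupp_col.
have [P [partP szP]] := partition_of_sizes dvdP.
have [Q [partQ szQ]] := partition_of_sizes dvdQ.
exists P, Q; apply/(KG_pairE partP partQ) => x y; rewrite !szP !szQ.
case=> /val_inj eq1 /val_inj eq2; apply: f_inj.
by rewrite [f x]surjective_pairing [f y]surjective_pairing eq1 eq2.
Qed.

Theorem lemma1 (n : nat) (hn : 1 <= n) :
  KG_exists n <->
  exists (m : nat) (M : 'M[nat]_m),
    0 < m /\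
    (forall i k : 'I_m, M i k <= 1) /\
    (forall i : 'I_m, i.+1 %| row_sum M i) /\
    (forall i : 'I_m, i.+1 %| col_sum M i) /\
    \sum_(i < m) row_sum M i = n /\
    \sum_(i < m) col_sum M i = n.
Proof.
split; first exact: KG_exists_matrix.
case=> m [M [_ [M01 [dvd_row [dvd_col [sum_row _]]]]]].
exact: matrix_KG_exists sum_row.
Qed.
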